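(* Assume $\bar K/\bar E$ is an unramified quadratic field extension, and let $c_0\in\bar K$ with $\mathrm{Tr}(c_0)=0$ and $v(c_0)=0$. Then: (i) the space $\mathcal F_{c_0}^{\mathrm{SL}_2(\mathcal O_E)}$ is one-dimensional, spanned by $\delta_{\mathcal O}:=\delta_{\bar Q(c_0)(\mathcal O_{\bar K})}$; (ii) $T_1(t)\delta_{\mathcal O}=0$.
   Context: Let $\bar E$ be a non-archimedean local field with ring of integers $\mathcal O_{\bar E}$, residue field of characteristic $\neq2$ and size $q$. Let $\mathcal O_E$ be a commutative ring with a surjection $\mathcal O_E\to\mathcal O_{\bar E}$ whose kernel $N\mathcal O_E$ is a square-zero ideal free of rank 1 over $\mathcal O_{\bar E}$; $E$ is the localization of $\mathcal O_E$ at all non-zero-divisors, a square-zero extension of $\bar E$ by $NE$. Let $\bar K$ be a quadratic extension of $\bar E$ with integers $\mathcal O_{\bar K}$ and $\mathcal O_K$ a flat $\mathcal O_E$-algebra with $\mathcal O_K\otimes_{\mathcal O_E}\mathcal O_{\bar E}\cong\mathcal O_{\bar K}$; $K=\mathcal O_K\otimes_{\mathcal O_E}E$, $NK=K\cdot NE$, $\bar K=K/NK$, $x\mapsto\bar x$ reduction. $\mathrm{Tr},\mathrm{Nm}$ trace and norm, $\iota(x)=\mathrm{Tr}(x)-x$, $\langle a,b\rangle=\mathrm{Tr}(a\iota(b))$; $v$ is the normalized valuation of $\bar K$. Let $t\in\mathcal O_E$ map to a uniformizer of $\mathcal O_{\bar E}$, and let $\psi_E:E\to\mathbb C^*$ be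 an additive character trivial on $\mathcal O_E$ and nontrivial on $t^{-1}N\mathcal O_E$. For $v=(x_1,x_2)\in K^2$ (row vectors) set $\det(\iota(v),v)=\iota(x_1)x_2-\iota(x_2)x_1$ and $B(v,w)=\tfrac12(\langle x_1,w_2\rangle-\langle w_1,x_2\rangle)$. For $c_0\in\bar K$ with $\mathrm{Tr}(c_0)=0$: $\bar Q(c_0)=\{\bar v\in\bar K^2:\det(\iota(\bar v),\bar v)=c_0\}$, $\bar Q(c_0)(\mathcal O_{\bar K})=\bar Q(c_0)\cap\mathcal O_{\bar K}^2$, $\widetilde Q(c_0)$ its preimage in $K^2$. $\mathcal F_{c_0}$ is the space of locally constant $\phi:\widetilde Q(c_0)\to\mathbb C$ with $\phi(v+n)=\psi_E(B(v,n))\phi(v)$ whenever $n\in(NK)^2$ and $v,v+n\in\widetilde Q(c_0)$, whose support has compact image in $\bar Q(c_0)$; $\mathrm{SL}_2(E)$ acts by $(r(g)\phi)(v)=\phi(vg)$. For a compact open $S\subset\bar Q(c_0)(\mathcal O_{\bar K})$, $\delta_S\in\mathcal F_{c_0}$ is the unique element vanishing at $v$ with $\bar v\notin S$ and equal to $1$ at every $v\in\mathcal O_K^2$ with $\bar v\in S$. The Hecke operator on $\mathcal F_{c_0}^{\mathrm{SL}_2(\mathcal O_E)}$ is $T_1(t)\phi=\sum_{h\in\mathrm{SL}_2(\mathcal O_E)\operatorname{diag}(t,t^{-1})\mathrm{SL}_2(\mathcal O_E)/\mathrm{SL}_2(\mathcal O_E)}r(h)\phi$. *)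

From HB Require Import structures.
From mathcomp Require Import all_boot all_algebra.
From mathcomp Require Import reals.
From mathcomp.real_closed Require Import complex.
Set Implicit Arguments. Unset Strict Implicit. Unset Printing Implicit Defensive.
Import GRing.Theory.
Local Open Scope ring_scope.

(* Quadratic algebras  R[w] = R ++ R w  with  w^2 = a w + b,  elements are    *)
(* pairs (x, y) standing for x + y w.  Used for K = E[w] and Kbar = Ebar[w].  *)
Section Quad.
Variables (R : comNzRingType) (a b : R).

Definition qadd (z w : R * R) : R * R := (z.1 + w.1, z.2 + w.2).
Definition qopp (z : R * R) : R * R := (- z.1, - z.2).
Definition qsub (z w : R * R) : R * R := qadd z (qopp w).
Definition qmul (z w : R * R) : R * R :=
  (z.1 * w.1 + b * z.2 * w.2, z.1 * w.2 + z.2 * w.1 + a * z.2 * w.2).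
Definition qscal (e : R) (z : R * R) : R * R := (e * z.1, e * z.2).
Definition qemb (e : R) : R * R := (e, 0).
(* trace of multiplication by x + y w in the basis (1, w) *)
Definition qtr (z : R * R) : R := 2%:R * z.1 + a * z.2.
Definition qiota (z : R * R) : R * R := qsub (qemb (qtr z)) z.
Definition qpair (u v : R * R) : R := qtr (qmul u (qiota v)).
(* det(iota(v), v) = iota(x1) x2 - iota(x2) x1 for v = (x1, x2) *)
Definition qdet (v : (R * R) * (R * R)) : R * R :=
  qsub (qmul (qiota v.1) v.2) (qmul (qiota v.2) v.1).
End Quad.

(*  E    : the ring E (localization of O_E), with O_E given as a subring OE.  *)
(*  Ebar : the local field, red : E -> Ebar reduction,                        *)
(*  O_Ebar = red(O_E), pi = red t.                                            *)
Section Setting.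
Variables (E : comUnitRingType) (Ebar : fieldType) (red : {rmorphism E -> Ebar}).
Variables (OE : pred E) (N t : E).

Definition OEbar (x : Ebar) : Prop := exists y, OE y /\ red y = x.

Definition is_subring (P : pred E) : Prop :=
  [/\ P 0, P 1, (forall x y, P x -> P y -> P (x + y)),
      (forall x, P x -> P (- x)) & (forall x y, P x -> P y -> P (x * y))].

Definition nzd (s : E) : Prop := OE s /\ forall y, OE y -> s * y = 0 -> y = 0.

(* Ebar is a non-archimedean local field with ring of integers OEbar and     *)
(* uniformizer pi = red t: discretely valued, complete, finite residue field *)
(* of characteristic <> 2.                                                    *)
Definition local_field_axioms : Prop :=
  let pi := red t in
  [/\ (forall x : Ebar, x != 0 ->
         exists (u : Ebar) (n : int), [/\ OEbar u, OEbar u^-1 & x = u * pi ^ n]),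
      ~ OEbar pi^-1,
      (* completeness of O_Ebar for the pi-adic topology *)
      (forall s : nat -> Ebar, (forall n, OEbar (s n)) ->
         (forall n, exists y, OEbar y /\ s n.+1 - s n = pi ^+ n * y) ->
         exists l, OEbar l /\ forall n, exists y, OEbar y /\ l - s n = pi ^+ n * y),
      (* finite residue field O_Ebar / pi *)
      (exists rs : seq Ebar, forall x, OEbar x ->
         exists r, [/\ r \in rs, OEbar r & exists y, OEbar y /\ x - r = pi * y]) &
      (2%:R != 0 :> Ebar /\ OEbar (2%:R)^-1)].

Definition setting_axioms : Prop :=
  [/\ [/\ is_subring OE, OE N & OE t],
      N * N = 0 /\
      (forall x, OE x -> (red x = 0 <-> exists y, OE y /\ x = N * y)),
      (* N O_E is free of rank 1 over O_Ebar *)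
      (forall x, OE x -> (x * N = 0 <-> red x = 0)),
      (* E is the localization of O_E at all non-zero-divisors *)
      (forall s, nzd s -> s \is a GRing.unit) /\
      (forall e, exists x s, [/\ OE x, nzd s & e = x / s]) &
      local_field_axioms].

(* Unramified quadratic extension Kbar = Ebar[w], w^2 = abar w + bbar, with   *)
(* O_K = O_E[w] (so O_Kbar = O_Ebar[w]); unramified: the reduction of        *)
(* X^2 - a X - b modulo pi is irreducible (for a quadratic: has no root).     *)
Definition unramified_quadratic (a b : E) : Prop :=
  [/\ OE a, OE b &
      forall x : Ebar, OEbar x ->
        ~ exists y, OEbar y /\ x ^+ 2 - red a * x - red b = red t * y].

Definition good_character (C : fieldType) (psi : E -> C) : Prop :=
  [/\ (forall x y, psi (x + y) = psi x * psi y),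
      (forall x, psi x != 0),
      (forall x, OE x -> psi x = 1) &
      exists x, OE x /\ psi (t^-1 * N * x) != 1].

Definition redK (z : E * E) : Ebar * Ebar := (red z.1, red z.2).
Definition redV (v : (E * E) * (E * E)) := (redK v.1, redK v.2).

Definition OK (z : E * E) : Prop := OE z.1 /\ OE z.2.
Definition OKbar (z : Ebar * Ebar) : Prop := OEbar z.1 /\ OEbar z.2.
Definition OK2 (v : (E * E) * (E * E)) : Prop := OK v.1 /\ OK v.2.
Definition OKbar2 (v : (Ebar * Ebar) * (Ebar * Ebar)) : Prop :=
  OKbar v.1 /\ OKbar v.2.

Definition NE (x : E) : Prop := exists e, x = N * e.
Definition NK (z : E * E) : Prop := NE z.1 /\ NE z.2.
Definition NK2 (v : (E * E) * (E * E)) : Prop := NK v.1 /\ NK v.2.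

Definition vadd (v w : (E * E) * (E * E)) :=
  (qadd v.1 w.1, qadd v.2 w.2).
Definition vsub (v w : (E * E) * (E * E)) :=
  (qsub v.1 w.1, qsub v.2 w.2).
Definition vscal (e : E) (v : (E * E) * (E * E)) := (qscal e v.1, qscal e v.2).

(* row vector times matrix: (x1, x2) g *)
Definition vact (v : (E * E) * (E * E)) (g : 'M[E]_2) : (E * E) * (E * E) :=
  (qadd (qscal (g 0 0) v.1) (qscal (g 1 0) v.2),
   qadd (qscal (g 0 1) v.1) (qscal (g 1 1) v.2)).

Section Quadratic.
Variables (a b : E).

Definition Qbar (c0 : Ebar * Ebar) (w : (Ebar * Ebar) * (Ebar * Ebar)) : Prop :=
  qdet (red a) (red b) w = c0.
Definition QbarO (c0 : Ebar * Ebar) w : Prop := Qbar c0 w /\ OKbar2 w.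
Definition Qtilde (c0 : Ebar * Ebar) (v : (E * E) * (E * E)) : Prop :=
  Qbar c0 (redV v).

Definition Bform (v w : (E * E) * (E * E)) : E :=
  (2%:R)^-1 * (qpair a b v.1 w.2 - qpair a b w.1 v.2).

Definition close (n : nat) (v w : (E * E) * (E * E)) : Prop :=
  let d := vsub v w in
  [/\ exists y, OE y /\ d.1.1 = t ^+ n * y, exists y, OE y /\ d.1.2 = t ^+ n * y,
      exists y, OE y /\ d.2.1 = t ^+ n * y & exists y, OE y /\ d.2.2 = t ^+ n * y].

(* the space F_{c0}: functions on tilde Q(c0) (represented as functions on K^2,
   only the values on tilde Q(c0) matter) *)
Definition in_F (C : fieldType) (psi : E -> C) (c0 : Ebar * Ebar)
    (phi : (E * E) * (E * E) -> C) : Prop :=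
  [/\
      (forall v, Qtilde c0 v -> exists n : nat,
         forall w, Qtilde c0 w -> close n w v -> phi w = phi v),
      (forall v n, NK2 n -> Qtilde c0 v -> Qtilde c0 (vadd v n) ->
         phi (vadd v n) = psi (Bform v n) * phi v) &
      (* support has compact (= bounded) image in bar Q(c0) *)
      (exists m : nat, forall v, Qtilde c0 v -> phi v != 0 ->
         OKbar2 (redV (vscal (t ^+ m) v)))].

Definition inSL2 (g : 'M[E]_2) : Prop := \det g = 1.
Definition inSL2O (g : 'M[E]_2) : Prop := inSL2 g /\ forall i j, OE (g i j).

Definition SL2O_invariant (C : fieldType) (c0 : Ebar * Ebar)
    (phi : (E * E) * (E * E) -> C) : Prop :=
  forall g, inSL2O g -> forall v, Qtilde c0 v -> phi (vact v g) = phi v.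

Definition is_delta_O (C : fieldType) (c0 : Ebar * Ebar)
    (delta : (E * E) * (E * E) -> C) : Prop :=
  forall v, Qtilde c0 v ->
    (~ QbarO c0 (redV v) -> delta v = 0) /\
    (OK2 v -> QbarO c0 (redV v) -> delta v = 1).

Definition diag_t : 'M[E]_2 :=
  \matrix_(i < 2, j < 2)
    (if i == j then (if (i : nat) == 0%N then t else t^-1) else 0).

Definition in_double_coset (h : 'M[E]_2) : Prop :=
  exists k1 k2, [/\ inSL2O k1, inSL2O k2 & h = k1 *m diag_t *m k2].

Definition same_coset (h1 h2 : 'M[E]_2) : Prop :=
  exists k, inSL2O k /\ h1 = h2 *m k.

Definition coset_reps (L : seq 'M[E]_2) : Prop :=
  [/\ (forall h, h \in L -> in_double_coset h),
      (forall h, in_double_coset h -> exists2 h', h' \in L & same_coset h h') &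
      (forall i j, (i < size L)%N -> (j < size L)%N ->
         same_coset (nth 0 L i) (nth 0 L j) -> i = j)].

Definition hecke (C : fieldType) (L : seq 'M[E]_2)
    (phi : (E * E) * (E * E) -> C) : (E * E) * (E * E) -> C :=
  fun v => \sum_(h <- L) phi (vact v h).

End Quadratic.
End Setting.

From HB Require Import structures.
From mathcomp Require Import all_boot all_algebra ring zify.
From mathcomp Require Import boolp reals.
From mathcomp.real_closed Require Import complex.
From Stdlib Require Import ClassicalEpsilon.
Set Implicit Arguments. Unset Strict Implicit. Unset Printing Implicit Defensive.
Import GRing.Theory.
Local Open Scope ring_scope.

(* An SL_2(O_E)-invariant phi in F_{c0} vanishes off the integral points of
   Q(c0): if a coordinate x of v is not integral then, K/E being unramified,
   neither is Nm x, and a unipotent element of SL_2(O_E) fixes the reduction of v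
   while moving v along its N-fibre by a vector on which psi o B is nontrivial.
   The integral points form one orbit modulo N, since c0 is a unit and
   SL_2(O_E) maps onto SL_2(O_Ebar); the equivariance along N-fibres then forces
   phi = phi(v0) delta_O, where delta_O(v) = psi(B(l, v - l)) for any integral
   lift l of the reduction of v.  T_1(t) delta_O is again invariant, so it is
   c delta_O with c = T_1(t) delta_O (v0) = 0: were v0 k diag(t, t^-1) k'
   integral, the reduction of the second row of v0 k would be divisible by pi,
   making c0 = det(iota v, v) a non-unit. *)

(** * Two by two matrices and the forms on K^2 *)

Definition qnorm (R : comNzRingType) (a b : R) (z : R * R) : R :=
  z.1 ^+ 2 + a * z.1 * z.2 - b * z.2 ^+ 2.

Ltac split_pairs := repeat match goal with
  |- context [?p] => is_var p; lazymatch type of p with prod _ _ => destruct p end end.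

Ltac pair_ring := match goal with
  | |- (_, _) = (_, _) => congr (_, _); pair_ring
  | _ => ring end.

Ltac quad_unfold :=
  rewrite /vadd /vsub /vscal /vact /Bform /qpair /qdet /qiota /qsub /qadd /qopp
          /qmul /qemb /qtr /qscal /qnorm /=.

Ltac quad_ring := split_pairs; quad_unfold; pair_ring.

Definition mx2 (R : nzRingType) (p q r s : R) : 'M[R]_2 :=
  \matrix_(i < 2, j < 2)
    if (i : nat) == 0%N then (if (j : nat) == 0%N then p else q)
    else (if (j : nat) == 0%N then r else s).

Section Matrix2.
Variable R : comNzRingType.
Implicit Types p q r s : R.

Lemma mx2_eta (A : 'M[R]_2) : A = mx2 (A 0 0) (A 0 1) (A 1 0) (A 1 1).
Proof.
apply/matrixP => -[[|[|i]] hi] // [[|[|j]] hj] //; rewrite !mxE /=;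
  by congr (A _ _); apply: val_inj.
Qed.

Lemma det_mx2 p q r s : \det (mx2 p q r s) = p * s - q * r.
Proof.
rewrite (expand_det_row _ 0) !big_ord_recl big_ord0 /cofactor !det_mx11 !mxE /=.
by rewrite /bump /= expr0 expr1; ring.
Qed.

Lemma mulmx2 p q r s p' q' r' s' :
  mx2 p q r s *m mx2 p' q' r' s' =
  mx2 (p * p' + q * r') (p * q' + q * s') (r * p' + s * r') (r * q' + s * s').
Proof.
apply/matrixP => -[[|[|i]] hi] // [[|[|j]] hj] //;
  by rewrite !mxE !big_ord_recl big_ord0 !mxE /= addr0.
Qed.

Lemma mx2_1 : 1%:M = mx2 1 0 0 (1 : R).
Proof. by apply/matrixP => -[[|[|i]] hi] // [[|[|j]] hj] //; rewrite !mxE. Qed.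

End Matrix2.

Section QuadraticForms.
Variables (R : comUnitRingType) (a b : R).
Implicit Types (v w : (R * R) * (R * R)) (g h : 'M[R]_2).

Lemma vact_mul v g h : vact (vact v g) h = vact v (g *m h).
Proof. by rewrite [in RHS](mx2_eta g) [in RHS](mx2_eta h) mulmx2 /vact !mxE /=; quad_ring. Qed.

Lemma vact1 v : vact v 1%:M = v.
Proof. by rewrite mx2_1 /vact !mxE /=; quad_ring. Qed.

Lemma vadd_vact v w g : vadd (vact v g) (vact w g) = vact (vadd v w) g.
Proof. by quad_ring. Qed.

Lemma vsub_vact v w g : vsub (vact v g) (vact w g) = vact (vsub v w) g.
Proof. by quad_ring. Qed.

Lemma vscal_vact e v g : vscal e (vact v g) = vact (vscal e v) g.
Proof. by quad_ring. Qed.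

Lemma vact_adj v g : \det g = 1 -> vact (vact v g) (\adj g) = v.
Proof. by move=> dg; rewrite vact_mul mul_mx_adj dg vact1. Qed.

Lemma qdet_vact v g : qdet a b (vact v g) = qscal (\det g) (qdet a b v).
Proof. by rewrite [in RHS](mx2_eta g) det_mx2; quad_ring. Qed.

Lemma Bform_vact v w g : Bform a b (vact v g) (vact w g) = \det g * Bform a b v w.
Proof. by rewrite [in RHS](mx2_eta g) det_mx2; quad_ring. Qed.

Lemma Bform_addl v v' w : Bform a b (vadd v v') w = Bform a b v w + Bform a b v' w.
Proof. by quad_ring. Qed.

Lemma Bform_addr v w w' : Bform a b v (vadd w w') = Bform a b v w + Bform a b v w'.
Proof. by quad_ring. Qed.

Lemma Bform_subl v v' w : Bform a b (vsub v v') w = Bform a b v w - Bform a b v' w.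
Proof. by quad_ring. Qed.

Lemma Bform_scalel e v w : Bform a b (vscal e v) w = e * Bform a b v w.
Proof. by quad_ring. Qed.

Lemma Bform_scaler e v w : Bform a b v (vscal e w) = e * Bform a b v w.
Proof. by quad_ring. Qed.

Lemma Bform_shear_upper v y : (2%:R : R) \is a GRing.unit ->
  Bform a b v ((0, 0), qscal y v.1) = y * qnorm a b v.1.
Proof. by move=> u2; rewrite -[RHS]mul1r -(mulVr u2) -mulrA; quad_ring. Qed.

Lemma Bform_shear_lower v y : (2%:R : R) \is a GRing.unit ->
  Bform a b v (qscal y v.2, (0, 0)) = - (y * qnorm a b v.2).
Proof. by move=> u2; rewrite -[RHS]mul1r -(mulVr u2) -mulrA; quad_ring. Qed.

End QuadraticForms.

Lemma qnorm_mul (R : comNzRingType) (a b : R) z w :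
  qnorm a b (qmul a b z w) = qnorm a b z * qnorm a b w.
Proof. by split_pairs; rewrite /qnorm /qmul /=; ring. Qed.

Lemma exists_transversal (T : eqType) (e : T -> T -> Prop) (x0 : T) (s : seq T) :
  (forall x, e x x) -> (forall x y, e x y -> e y x) ->
  exists s', [/\ {subset s' <= s},
    forall x, x \in s -> exists2 y, y \in s' & e x y
  & forall i j, (i < size s')%N -> (j < size s')%N ->
      e (nth x0 s' i) (nth x0 s' j) -> i = j].
Proof.
move=> e_refl e_sym; elim: s => [|x s [s' [sub cover uniq]]]; first by exists [::].
have [[y ys' exy]|nx] := pselect (exists2 y, y \in s' & e x y).
  exists s'; split=> // [z /sub zs | z]; first by rewrite in_cons zs orbT.
  by rewrite in_cons => /predU1P [-> | /cover //]; exists y.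
exists (x :: s'); split.
- by move=> z; rewrite !in_cons => /predU1P [-> | /sub ->]; rewrite ?eqxx ?orbT.
- move=> z; rewrite in_cons => /predU1P [-> | /cover [y ys' ezy]].
    by exists x; rewrite ?mem_head.
  by exists y; rewrite // in_cons ys' orbT.
move=> [|i] [|j] //= si sj.
- by move=> exj; case: nx; exists (nth x0 s' j); rewrite ?mem_nth.
- by move=> eix; case: nx; exists (nth x0 s' i); [rewrite mem_nth | apply: e_sym].
- by move=> eij; congr S; apply: uniq.
Qed.

(** * Arithmetic of O_E and O_Ebar *)

Section Setting.
Variables (E : comUnitRingType) (Ebar : fieldType) (red : {rmorphism E -> Ebar}).
Variables (OE : pred E) (N t : E).
Hypothesis Hset : setting_axioms red OE N t.

Local Notation Ob := (OEbar red OE).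
Local Notation pi := (red t).

Lemma OE_subring : is_subring OE. Proof. by case: Hset => -[]. Qed.
Lemma OE0 : OE 0. Proof. by case: OE_subring. Qed.
Lemma OE1 : OE 1. Proof. by case: OE_subring. Qed.
Lemma OED x y : OE x -> OE y -> OE (x + y). Proof. by case: OE_subring => _ _ + _ _; apply. Qed.
Lemma OEN x : OE x -> OE (- x). Proof. by case: OE_subring => _ _ _ + _; apply. Qed.
Lemma OEM x y : OE x -> OE y -> OE (x * y). Proof. by case: OE_subring => _ _ _ _; apply. Qed.
Lemma OEX x n : OE x -> OE (x ^+ n).
Proof. by move=> ox; elim: n => [|n IH]; rewrite ?expr0 ?exprS; [exact: OE1 | exact: OEM]. Qed.
Lemma OEn n : OE n%:R.
Proof. by elim: n => [|n IH]; rewrite ?mulr0n ?mulrS; [exact: OE0 | exact: OED OE1 IH]. Qed.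
Lemma OE_N : OE N. Proof. by case: Hset => -[]. Qed.
Lemma OE_t : OE t. Proof. by case: Hset => -[]. Qed.

Lemma N_square0 : N * N = 0. Proof. by case: Hset => _ []. Qed.
Lemma red_eq0_OE x : OE x -> (red x = 0 <-> exists y, OE y /\ x = N * y).
Proof. by case: Hset => _ [_ +] _ _ _; apply. Qed.
Lemma mulN_eq0 x : OE x -> (x * N = 0 <-> red x = 0).
Proof. by case: Hset => _ _ + _ _; apply. Qed.

Lemma Ob_red x : OE x -> Ob (red x). Proof. by exists x. Qed.
Lemma Ob0 : Ob 0. Proof. by rewrite -(rmorph0 red); apply/Ob_red/OE0. Qed.
Lemma Ob1 : Ob 1. Proof. by rewrite -(rmorph1 red); apply/Ob_red/OE1. Qed.
Lemma Obn n : Ob n%:R. Proof. by rewrite -(rmorph_nat red); apply/Ob_red/OEn. Qed.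
Lemma ObD x y : Ob x -> Ob y -> Ob (x + y).
Proof. by move=> [x' [ox <-]] [y' [oy <-]]; rewrite -rmorphD; apply/Ob_red/OED. Qed.
Lemma ObN x : Ob x -> Ob (- x).
Proof. by move=> [x' [ox <-]]; rewrite -rmorphN; apply/Ob_red/OEN. Qed.
Lemma ObM x y : Ob x -> Ob y -> Ob (x * y).
Proof. by move=> [x' [ox <-]] [y' [oy <-]]; rewrite -rmorphM; apply/Ob_red/OEM. Qed.
Lemma ObX x n : Ob x -> Ob (x ^+ n).
Proof. by move=> [x' [ox <-]]; rewrite -rmorphXn; apply/Ob_red/OEX. Qed.

Ltac integral := repeat first
  [ assumption | apply: OE0 | apply: OE1 | apply: OEn | apply: OE_N | apply: OE_t
  | apply: OED | apply: OEN | apply: OEM | apply: OEX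
  | apply: Ob0 | apply: Ob1 | apply: Obn | apply: ObD | apply: ObN | apply: ObM
  | apply: ObX | apply: Ob_red ].

Lemma redN : red N = 0.
Proof. by apply/(red_eq0_OE OE_N); exists 1; rewrite mulr1; split; integral. Qed.

Lemma N_neq0 : N != 0.
Proof.
apply/eqP => N0; have := (mulN_eq0 OE1).1.
by rewrite N0 mulr0 rmorph1 => /(_ erefl)/eqP; rewrite oner_eq0.
Qed.

Lemma unit_red s : OE s -> red s != 0 -> s \is a GRing.unit.
Proof.
move=> os rs; case: Hset => _ _ _ [+ _] _; apply; split=> // y oy sy0.
have red_mul_eq0 z : red (s * z) = 0 -> red z = 0.
  by rewrite rmorphM => /eqP; rewrite mulf_eq0 (negbTE rs) => /eqP.
have /(red_eq0_OE oy) [z [oz yE]] : red y = 0 by apply: red_mul_eq0; rewrite sy0 rmorph0.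
have /(red_eq0_OE oz) [w [_ zE]] : red z = 0.
  apply: red_mul_eq0; apply/(mulN_eq0 _).1; first by integral.
  by rewrite -mulrA (mulrC z) -yE.
by rewrite yE zE mulrA N_square0 mul0r.
Qed.

Lemma red_eq0 e : red e = 0 -> exists e', e = N * e'.
Proof.
case: Hset => _ _ _ [_ /(_ e) [x [s [ox [os nzs] ->]]]] _.
have rs : red s != 0.
  apply/eqP => /(mulN_eq0 os).2 sN0.
  by move: N_neq0; rewrite (nzs _ OE_N sN0) eqxx.
rewrite rmorphM rmorphV ?unit_red // => /eqP.
rewrite mulf_eq0 invr_eq0 (negbTE rs) orbF => /eqP /(red_eq0_OE ox) [y [_ ->]].
by exists (y / s); rewrite mulrA.
Qed.

Lemma mulN_red e e' : red e = red e' -> N * e = N * e'.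
Proof.
move=> ee'; have [z ez] : exists z, e - e' = N * z by apply: red_eq0; rewrite rmorphB ee' subrr.
by apply/eqP; rewrite -subr_eq0 -mulrBr ez mulrA N_square0 mul0r.
Qed.

Lemma OE_mulN e : Ob (red e) -> OE (N * e).
Proof. by move=> [y [oy /mulN_red <-]]; integral. Qed.

Lemma pi_neq0 : pi != 0.
Proof.
case: Hset => _ _ _ _ [_ + _ _ _]; apply: contra_notN => /eqP ->.
by rewrite invr0; exact: Ob0.
Qed.

Lemma t_unit : t \is a GRing.unit. Proof. exact: unit_red OE_t pi_neq0. Qed.

Lemma two_neq0 : 2%:R != 0 :> Ebar. Proof. by case: Hset => _ _ _ _ [_ _ _ _ []]. Qed.
Lemma Ob_inv2 : Ob (2%:R)^-1. Proof. by case: Hset => _ _ _ _ [_ _ _ _ []]. Qed.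

Lemma two_unit : (2%:R : E) \is a GRing.unit.
Proof. by apply: unit_red; [exact: OEn | rewrite rmorph_nat two_neq0]. Qed.

Lemma mul_1addN_1subN z : (1 + N * z) * (1 - N * z) = 1.
Proof. by ring: N_square0. Qed.

Lemma OE_inv s : OE s -> red s != 0 -> Ob (red s)^-1 -> OE s^-1.
Proof.
move=> os rs [y [oy ry]].
have /(red_eq0_OE _) [|z [oz ez]] : red (s * y - 1) = 0.
- by rewrite rmorphB rmorphM ry rmorph1 divff ?subrr.
- by integral.
suff -> : s^-1 = y * (1 - N * z) by integral.
apply: (mulrI (unit_red os rs)); rewrite divrr ?unit_red // mulrA.
have -> : s * y = 1 + N * z by rewrite -ez; ring.
by rewrite mul_1addN_1subN.
Qed.

Lemma OE_inv2 : OE (2%:R)^-1.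
Proof. by apply: OE_inv; rewrite ?rmorph_nat; [exact: OEn | exact: two_neq0 | exact: Ob_inv2]. Qed.

Lemma valuation x : x != 0 -> exists u (n : int), [/\ Ob u, Ob u^-1 & x = u * pi ^ n].
Proof. by case: Hset => _ _ _ _ [+ _ _ _ _]; apply. Qed.

Lemma pi_inv_notOb : ~ Ob pi^-1. Proof. by case: Hset => _ _ _ _ []. Qed.

Lemma pi_pow_integral x : exists m : nat, Ob (pi ^+ m * x).
Proof.
have [->|/valuation [u [[] k [ou _ ->]]]] := eqVneq x 0.
- by exists 0%N; rewrite mulr0; exact: Ob0.
- by exists 0%N; rewrite mul1r -exprnP; integral.
exists k.+1; rewrite NegzE -exprnN mulrCA mulrV ?mulr1 //.
by rewrite unitfE expf_neq0 // pi_neq0.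
Qed.

Definition in_piO (r : Ebar) := exists y, Ob y /\ r = pi * y.

Lemma integral_dichotomy r : Ob r -> in_piO r \/ (r != 0 /\ Ob r^-1).
Proof.
move=> or; have [->|nr] := eqVneq r 0.
  by left; exists 0; rewrite mulr0; split; integral.
have [u [n [ou ou' re]]] := valuation nr.
have un : u != 0 by apply: contraNneq nr => u0; rewrite re u0 mul0r.
case: n re => [[|k]|k]; rewrite ?NegzE -?exprnN -?exprnP => re.
- by right; rewrite re expr0 mulr1.
- by left; exists (u * pi ^+ k); rewrite re exprS mulrCA; split; integral.
- exfalso; apply: pi_inv_notOb.
  have -> : pi^-1 = r * u^-1 * pi ^+ k.
    by rewrite re exprS; field; rewrite un expf_neq0 pi_neq0.
  by integral.
Qed.

Lemma unit_notin_piO w : w != 0 -> Ob w^-1 -> ~ in_piO w.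
Proof.
move=> nw ow [y [oy e]]; apply: pi_inv_notOb.
have ny : y != 0 by move: nw; rewrite e mulf_eq0 negb_or => /andP[].
have -> : pi^-1 = y * w^-1 by rewrite e; field; rewrite pi_neq0 ny.
by integral.
Qed.

Lemma t_pow_integral e : exists m : nat, OE (t ^+ m * e).
Proof.
have [m1 [y [oy ry]]] := pi_pow_integral (red e).
have [e' he'] : exists e', t ^+ m1 * e - y = N * e'.
  by apply: red_eq0; rewrite rmorphB rmorphM rmorphXn ry subrr.
have [m2 h2] := pi_pow_integral (red e').
exists (m2 + m1)%N.
have -> : t ^+ (m2 + m1) * e = t ^+ m2 * y + N * (t ^+ m2 * e').
  by rewrite mulrCA -he' exprD; ring.
by apply: OED; [integral | apply: OE_mulN; rewrite rmorphM rmorphXn].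
Qed.

Lemma OE_t_pow_leq m n x : (m <= n)%N -> OE (t ^+ m * x) -> OE (t ^+ n * x).
Proof.
by move=> mn ox; rewrite -(subnKC mn) exprD -mulrA mulrCA; integral.
Qed.

Definition lift (x : Ebar) : E := epsilon (inhabits 0) (fun y => OE y /\ red y = x).

Lemma liftP x : Ob x -> OE (lift x) /\ red (lift x) = x.
Proof. exact: epsilon_spec. Qed.

(** * SL_2(O_E) and the double coset of diag(t, t^-1) *)

Lemma OE_det n (A : 'M[E]_n) : (forall i j, OE (A i j)) -> OE (\det A).
Proof.
move=> oA; apply: (big_ind OE) => [|x y|s _]; [exact: OE0 | exact: OED |].
apply: OEM; first by integral.
by apply: (big_ind OE) => [|x y|i _]; [exact: OE1 | exact: OEM | exact: oA].
Qed.

Lemma OE_adj n (A : 'M[E]_n) : (forall i j, OE (A i j)) -> forall i j, OE (\adj A i j).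
Proof.
move=> oA i j; rewrite mxE /cofactor; apply: OEM; first by integral.
by apply: OE_det => k l; rewrite !mxE.
Qed.

Lemma OE_mulmx m n p (A : 'M[E]_(m, n)) (B : 'M[E]_(n, p)) :
  (forall i j, OE (A i j)) -> (forall i j, OE (B i j)) -> forall i j, OE ((A *m B) i j).
Proof.
move=> oA oB i j; rewrite mxE.
by apply: (big_ind OE) => [|x y|k _]; [exact: OE0 | exact: OED | exact: OEM].
Qed.

Lemma inSL2O_1 : inSL2O OE 1%:M.
Proof.
split=> [|i j]; first exact: det1.
by rewrite mxE; case: (i == j); [exact: OE1 | exact: OE0].
Qed.

Lemma inSL2O_mul g h : inSL2O OE g -> inSL2O OE h -> inSL2O OE (g *m h).
Proof.
move=> [dg og] [dh oh]; split; last exact: OE_mulmx.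
by rewrite /inSL2 det_mulmx dg dh mulr1.
Qed.

Lemma inSL2O_adj g : inSL2O OE g -> inSL2O OE (\adj g).
Proof.
move=> [dg og]; split; last exact: OE_adj.
by have := congr1 determinant (mul_mx_adj g); rewrite det_mulmx dg mul1r det1.
Qed.

Lemma same_coset_refl h : same_coset OE h h.
Proof. by exists 1%:M; rewrite mulmx1; split=> //; exact: inSL2O_1. Qed.

Lemma same_coset_sym h1 h2 : same_coset OE h1 h2 -> same_coset OE h2 h1.
Proof.
move=> [k [kK ->]]; exists (\adj k); split; first exact: inSL2O_adj.
by rewrite -mulmxA mul_mx_adj (proj1 kK) mulmx1.
Qed.

Lemma same_coset_trans h1 h2 h3 :
  same_coset OE h1 h2 -> same_coset OE h2 h3 -> same_coset OE h1 h3.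
Proof.
move=> [k [kK ->]] [k' [k'K ->]]; exists (k' *m k); split; first exact: inSL2O_mul.
by rewrite mulmxA.
Qed.

Lemma same_coset_mul2l g h1 h2 :
  inSL2O OE g -> same_coset OE (g *m h1) (g *m h2) -> same_coset OE h1 h2.
Proof.
move=> [dg _] [k [kK e]]; exists k; split=> //.
by have := congr1 (mulmx (\adj g)) e; rewrite !mulmxA mul_adj_mx dg !mul1mx.
Qed.

Lemma inSL2O_mx2 p q r s : OE p -> OE q -> OE r -> OE s -> p * s - q * r = 1 ->
  inSL2O OE (mx2 p q r s).
Proof.
move=> op oq or os d; split=> [|i j]; first by rewrite /inSL2 det_mx2.
by rewrite !mxE; case: (i : nat) => [|?]; case: (j : nat).
Qed.

Lemma lift_SL2 (gb : 'M[Ebar]_2) : (forall i j, Ob (gb i j)) -> \det gb = 1 ->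
  exists2 g, inSL2O OE g & map_mx red g = gb.
Proof.
move=> ogb dgb.
have [[o00 r00] [o01 r01]] := (liftP (ogb 0 0), liftP (ogb 0 1)).
have [[o10 r10] [o11 r11]] := (liftP (ogb 1 0), liftP (ogb 1 1)).
set D := lift (gb 0 0) * lift (gb 1 1) - lift (gb 0 1) * lift (gb 1 0).
have /(red_eq0_OE _) [|z [oz Dz]] : red (D - 1) = 0.
- by rewrite /D !rmorphB !rmorphM r00 r01 r10 r11 -det_mx2 -mx2_eta dgb rmorph1 subrr.
- by integral.
exists (mx2 (lift (gb 0 0) * (1 - N * z)) (lift (gb 0 1))
            (lift (gb 1 0) * (1 - N * z)) (lift (gb 1 1))).
  apply: inSL2O_mx2; try by integral.
  rewrite (_ : _ - _ = D * (1 - N * z)); last by rewrite /D; ring.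
  by rewrite (_ : D = 1 + N * z) ?mul_1addN_1subN // -Dz; ring.
rewrite [RHS]mx2_eta; apply/matrixP => i j; rewrite !mxE.
by case: (i : nat) => [|?]; case: (j : nat) => [|?];
  rewrite /= ?rmorphM ?rmorphB ?rmorph1 ?rmorphM ?redN ?mul0r ?subr0 ?mulr1.
Qed.

Lemma diag_tE : diag_t t = mx2 t 0 0 t^-1.
Proof. by apply/matrixP => -[[|[|i]] hi] // [[|[|j]] hj] //; rewrite !mxE. Qed.

Lemma in_double_coset_det h : in_double_coset OE t h -> \det h = 1.
Proof.
move=> [k1 [k2 [[d1 _] [d2 _] ->]]].
by rewrite !det_mulmx d1 d2 diag_tE det_mx2 mulr0 subr0 mulrV ?t_unit ?mulr1.
Qed.

Lemma in_double_coset_mull g h :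
  inSL2O OE g -> in_double_coset OE t h -> in_double_coset OE t (g *m h).
Proof.
move=> gK [k1 [k2 [k1K k2K ->]]]; exists (g *m k1), k2; rewrite !mulmxA.
by split=> //; exact: inSL2O_mul.
Qed.

Lemma residues_mod_t :
  exists S : seq E, forall x, OE x -> exists2 s, s \in S & exists2 y, OE y & x = s + t * y.
Proof.
case: Hset => _ _ _ _ [_ _ _ [rs Hrs] _].
have mod_pi x : OE x -> exists2 r, r \in rs & exists y z, [/\ OE y, OE z & x = lift r + t * y + N * z].
  move=> ox; have [r [rrs or [y [oy xry]]]] := Hrs _ (Ob_red ox).
  have [[olr rlr] [oly rly]] := (liftP or, liftP oy).
  have /(red_eq0_OE _) [|z [oz ez]] : red (x - lift r - t * lift y) = 0.
  - by rewrite !rmorphB rmorphM rlr rly -xry subrr.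
  - by integral.
  by exists r => //; exists (lift y), z; split=> //; rewrite -ez; ring.
exists [seq lift r + N * lift r' | r <- rs, r' <- rs] => x ox.
have [r rrs [y [z [oy oz ->]]]] := mod_pi x ox.
have [r' r'rs [y' [z' [oy' oz' ->]]]] := mod_pi z oz.
exists (lift r + N * lift r'); first exact: allpairs_f.
by exists (y + N * y'); [integral | ring: N_square0].
Qed.

Lemma residues_mod_tpow n : exists S : seq E,
  forall x, OE x -> exists2 s, s \in S & exists2 y, OE y & x = s + t ^+ n * y.
Proof.
elim: n => [|n [S HS]].
  by exists [:: 0] => x ox; exists 0; rewrite ?mem_head //; exists x; rewrite ?expr0 ?mul1r ?add0r.
have [S1 HS1] := residues_mod_t.
exists [seq s + t ^+ n * s1 | s <- S, s1 <- S1] => x ox.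
have [s sS [y oy ->]] := HS x ox; have [s1 s1S [y1 oy1 ->]] := HS1 y oy.
by exists (s + t ^+ n * s1); [exact: allpairs_f | exists y1; rewrite // exprSr; ring].
Qed.

(* Conjugation by diag(t, t^-1) multiplies the upper right entry by t^-2. *)
Lemma same_coset_diag k z : inSL2O OE k -> inSL2O OE (k + t ^+ 2 *: z) ->
  (forall i j, OE (z i j)) ->
  same_coset OE ((k + t ^+ 2 *: z) *m diag_t t) (k *m diag_t t).
Proof.
move=> [dk ok] kzK oz; have tV := mulVr t_unit.
set m := \adj k *m (k + t ^+ 2 *: z).
have mK : inSL2O OE m by apply: inSL2O_mul => //; apply: inSL2O_adj.
have m01 : m 0 1 = t ^+ 2 * (\adj k *m z) 0 1.
  by rewrite /m mulmxDr mul_adj_mx dk -scalemxAr !mxE /= add0r.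
have dm : m 0 0 * m 1 1 - m 0 1 * m 1 0 = 1 by rewrite -det_mx2 -mx2_eta; exact: mK.1.
exists (mx2 (m 0 0) ((\adj k *m z) 0 1) (t ^+ 2 * m 1 0) (m 1 1)); split.
  apply: inSL2O_mx2; [exact: mK.2 | exact: (OE_mulmx (OE_adj ok) oz) | | exact: mK.2 |].
  - by apply: OEM; [integral | exact: mK.2].
  - by rewrite -dm m01; ring.
have DW : diag_t t *m mx2 (m 0 0) ((\adj k *m z) 0 1) (t ^+ 2 * m 1 0) (m 1 1) =
          m *m diag_t t.
  by rewrite diag_tE [in RHS](mx2_eta m) m01 !mulmx2; congr (mx2 _ _ _ _); ring: tV.
by rewrite -mulmxA DW mulmxA /m mulmxA mul_mx_adj dk mul1mx.
Qed.

(* k diag(t, t^-1) SL_2(O_E) only depends on k modulo t^2, and O_E / t^2 is finite. *)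
Lemma exists_coset_reps : exists L, coset_reps OE t L.
Proof.
have [S HS] := residues_mod_tpow 2.
pose S2 := [seq (p, q) | p <- S, q <- S].
pose residues := [seq mx2 x.1 x.2 y.1 y.2 | x <- S2, y <- S2].
pose congr_to r k := exists2 z : 'M[E]_2, (forall i j, OE (z i j)) & k = r + t ^+ 2 *: z.
pose rep r := epsilon (inhabits 1%:M) (fun k => inSL2O OE k /\ congr_to r k) *m diag_t t.
pose cands := [seq h <- map rep residues | `[< in_double_coset OE t h >]].
have [L [Lsub Lcover Luniq]] := exists_transversal 0 cands same_coset_refl same_coset_sym.
exists L; split=> // [h /Lsub | h [k1 [k2 [k1K k2K ->]]]].
  by rewrite mem_filter => /andP [/asboolP].
have [r rres k1r] : exists2 r, r \in residues & congr_to r k1.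
  have [f Hf] : exists f : 'I_2 * 'I_2 -> E * E, forall ij,
      [/\ (f ij).1 \in S, OE (f ij).2 & k1 ij.1 ij.2 = (f ij).1 + t ^+ 2 * (f ij).2].
    apply: (@fin_all_exists _ (fun=> (E * E)%type)
      (fun ij sy => [/\ sy.1 \in S, OE sy.2 & k1 ij.1 ij.2 = sy.1 + t ^+ 2 * sy.2])) => ij.
    by have [s ? [y ? ?]] := HS _ (k1K.2 ij.1 ij.2); exists (s, y).
  exists (\matrix_(i, j) (f (i, j)).1).
    rewrite [X in X \in _]mx2_eta !mxE; apply/allpairsP.
    exists (((f (0, 0)).1, (f (0, 1)).1), ((f (1, 0)).1, (f (1, 1)).1)).
    split=> //=; apply: allpairs_f;
      [case: (Hf (0, 0)) | case: (Hf (0, 1)) | case: (Hf (1, 0)) | case: (Hf (1, 1))] => //.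
  exists (\matrix_(i, j) (f (i, j)).2); first by move=> i j; rewrite mxE; case: (Hf (i, j)).
  by apply/matrixP => i j; rewrite !mxE; case: (Hf (i, j)).
pose k := epsilon (inhabits 1%:M) (fun k => inSL2O OE k /\ congr_to r k).
have [kK [zk ozk kE]] : inSL2O OE k /\ congr_to r k.
  exact: (epsilon_spec _ (fun k => inSL2O OE k /\ congr_to r k) (ex_intro _ k1 (conj k1K k1r))).
have [z1 oz1 k1E] := k1r.
have [y yL repy] : exists2 y, y \in L & same_coset OE (rep r) y.
  apply: Lcover; rewrite mem_filter map_f // andbT; apply/asboolP.
  by exists k, 1%:M; rewrite mulmx1; split=> //; exact: inSL2O_1.
exists y => //; apply: same_coset_trans (_ : same_coset OE _ (k1 *m diag_t t)) _.
  by exists k2.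
apply: same_coset_trans repy.
have k1kE : k1 = k + t ^+ 2 *: (z1 - zk) by rewrite k1E kE scalerBr addrACA subrr addr0.
rewrite k1kE; apply: same_coset_diag => // [|i j]; first by rewrite -k1kE.
by rewrite !mxE; apply: OED; [exact: oz1 | apply: OEN; exact: ozk].
Qed.

(** * Vectors in K^2 and their reductions *)
Local Notation OK2 := (OK2 OE).
Local Notation redV := (redV red).
Local Notation red_integral v := (OKbar2 red OE (redV v)).
Implicit Types (v w : (E * E) * (E * E)) (g : 'M[E]_2).

Lemma OK2_vadd v w : OK2 v -> OK2 w -> OK2 (vadd v w).
Proof. by split_pairs; rewrite /OK2 /OK /= => -[[? ?] [? ?]] [[? ?] [? ?]]; do !split; integral. Qed.

Lemma OK2_vscal e v : OE e -> OK2 v -> OK2 (vscal e v).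
Proof. by split_pairs; rewrite /OK2 /OK /= => ? [[? ?] [? ?]]; do !split; integral. Qed.

Lemma OK2_vact v g : (forall i j, OE (g i j)) -> OK2 v -> OK2 (vact v g).
Proof.
move=> og; have := og 0 0; have := og 0 1; have := og 1 0; have := og 1 1.
by split_pairs; rewrite /OK2 /OK /= => ? ? ? ? [[? ?] [? ?]]; do !split; integral.
Qed.

Lemma OKbar2_vact (v : (Ebar * Ebar) * (Ebar * Ebar)) (g : 'M[Ebar]_2) :
  (forall i j, Ob (g i j)) -> OKbar2 red OE v -> OKbar2 red OE (vact v g).
Proof.
move=> og; have := og 0 0; have := og 0 1; have := og 1 0; have := og 1 1.
by split_pairs; rewrite /OKbar2 /OKbar /= => ? ? ? ? [[? ?] [? ?]]; do !split; integral.
Qed.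

Lemma redV_vadd v w : redV (vadd v w) = vadd (redV v) (redV w).
Proof. by split_pairs; rewrite /redV /redK /= !rmorphD. Qed.

Lemma redV_vact v g : redV (vact v g) = vact (redV v) (map_mx red g).
Proof. by split_pairs; rewrite /redV /redK /vact /= !mxE !rmorphD !rmorphM. Qed.

Lemma redV_vaddN v w : redV (vadd v (vscal N w)) = redV v.
Proof.
by split_pairs; rewrite /redV /redK /vadd /vscal /qadd /qscal /= !rmorphD !rmorphM redN !mul0r !addr0.
Qed.

Lemma NK2P n : NK2 N n -> exists w, n = vscal N w.
Proof.
split_pairs; rewrite /NK2 /NK /NE /= => -[[[e1 ->] [e2 ->]] [[e3 ->] [e4 ->]]].
by exists ((e1, e2), (e3, e4)).
Qed.

Lemma NK2_vscal w : NK2 N (vscal N w).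
Proof. by split_pairs; do !split; eexists. Qed.

Lemma red_eq_mulN x y : red x = red y -> exists z, x - y = N * z.
Proof. by move=> e; apply: red_eq0; rewrite rmorphB e subrr. Qed.

Lemma redV_eq v w : redV v = redV w -> exists n, vsub v w = vscal N n.
Proof.
split_pairs; rewrite /redV /redK => -[/red_eq_mulN [z1 e1] /red_eq_mulN [z2 e2]
  /red_eq_mulN [z3 e3] /red_eq_mulN [z4 e4]].
by exists ((z1, z2), (z3, z4)); rewrite /vsub /vscal /qsub /qadd /qopp /qscal /= e1 e2 e3 e4.
Qed.

Lemma redV_eq_OK2 v w : OK2 v -> OK2 w -> redV v = redV w ->
  exists2 n, OK2 n & vsub v w = vscal N n.
Proof.
have red_eq_OE x y : OE x -> OE y -> red x = red y -> exists z, OE z /\ x - y = N * z.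
  by move=> ox oy e; apply/red_eq0_OE; [integral | rewrite rmorphB e subrr].
split_pairs; rewrite /OK2 /OK /redV /redK /= => -[[o1 o2] [o3 o4]] [[p1 p2] [p3 p4]].
case=> /(red_eq_OE _ _ o1 p1) [z1 [q1 e1]] /(red_eq_OE _ _ o2 p2) [z2 [q2 e2]]
  /(red_eq_OE _ _ o3 p3) [z3 [q3 e3]] /(red_eq_OE _ _ o4 p4) [z4 [q4 e4]].
exists ((z1, z2), (z3, z4)); first by do !split.
by rewrite /vsub /vscal /qsub /qadd /qopp /qscal /= e1 e2 e3 e4.
Qed.

Lemma OKbar2_redV v : OK2 v -> OKbar2 red OE (redV v).
Proof. by split_pairs; rewrite /OK2 /OK => -[[? ?] [? ?]]; do !split; integral. Qed.

Definition liftV (u : (Ebar * Ebar) * (Ebar * Ebar)) : (E * E) * (E * E) :=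
  ((lift u.1.1, lift u.1.2), (lift u.2.1, lift u.2.2)).

Lemma liftVP u : OKbar2 red OE u -> OK2 (liftV u) /\ redV (liftV u) = u.
Proof.
split_pairs; rewrite /OKbar2 /OKbar /liftV /redV /redK /OK2 /OK /= => -[[/liftP [? ->] /liftP [? ->]] [/liftP [? ->] /liftP [? ->]]].
by do !split.
Qed.

Lemma closeP n w v : close OE t n w v -> exists2 y, OK2 y & vsub w v = vscal (t ^+ n) y.
Proof.
rewrite /close; case: (vsub w v) => [[d1 d2] [d3 d4]] /=.
by case=> -[y1 [? ->]] [y2 [? ->]] [y3 [? ->]] [y4 [? ->]]; exists ((y1, y2), (y3, y4)).
Qed.

Lemma t_pow_integral_vec d : exists n : nat, OK2 (vscal (t ^+ n) d).
Proof.
case: d => [[d1 d2] [d3 d4]].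
have [m1 o1] := t_pow_integral d1; have [m2 o2] := t_pow_integral d2.
have [m3 o3] := t_pow_integral d3; have [m4 o4] := t_pow_integral d4.
exists (m1 + m2 + m3 + m4)%N; do !split => /=; apply: OE_t_pow_leq;
  [| exact: o1 | | exact: o2 | | exact: o3 | | exact: o4]; lia.
Qed.

Lemma red_integral_add v d : OK2 d -> red_integral v -> red_integral (vadd v d).
Proof.
move=> /OKbar2_redV od iv; rewrite redV_vadd; move: (redV v) (redV d) iv od.
case=> [[? ?] [? ?]] [[? ?] [? ?]]; rewrite /OKbar2 /OKbar /vadd /qadd /=.
by move=> [[? ?] [? ?]] [[? ?] [? ?]]; do !split; integral.
Qed.

Lemma red_integral_vact v g :
  (forall i j, OE (g i j)) -> red_integral v -> red_integral (vact v g).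
Proof. by move=> og iv; rewrite redV_vact; apply: OKbar2_vact => // i j; rewrite mxE; integral. Qed.

Lemma red_integral_vactE v g : inSL2O OE g -> red_integral (vact v g) <-> red_integral v.
Proof.
move=> [dg og]; split; last exact: red_integral_vact.
by move=> /(red_integral_vact (OE_adj og)); rewrite vact_adj.
Qed.

(** * The norm form and delta_O *)

Section Quadratic.
Variables (a b : E).
Hypothesis Hunr : unramified_quadratic red OE t a b.

Local Notation normb := (qnorm (red a) (red b)).

Lemma OE_a : OE a. Proof. by case: Hunr. Qed.
Lemma OE_b : OE b. Proof. by case: Hunr. Qed.

Lemma qnorm_unit x y : Ob x -> Ob y -> ~ (in_piO x /\ in_piO y) ->
  normb (x, y) != 0 /\ Ob (normb (x, y))^-1.
Proof.
move=> ox oy not_piO; have oa := OE_a; have ob := OE_b.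
case: (integral_dichotomy oy) => [[z [oz ye]]|[ny oy']].
  case: (integral_dichotomy ox) => [xp|[nx ox']].
    by case: not_piO; split => //; exists z.
  have on : Ob (normb (x, y)) by rewrite /qnorm /=; integral.
  case: (integral_dichotomy on) => // -[w [ow e]]; exfalso.
  apply: (@unit_notin_piO (x ^+ 2)); first by rewrite expf_neq0.
    by rewrite -exprVn; integral.
  exists (w - (red a * x * z - red b * pi * z ^+ 2)); split; first by integral.
  by move: e; rewrite /qnorm /= ye => e; rewrite mulrBr -e; ring.
set X := - x * y^-1.
have oX : Ob X by integral.
have oP : Ob (X ^+ 2 - red a * X - red b) by integral.
case: (integral_dichotomy oP) => [|[nP oP']]; first by case: Hunr => _ _ /(_ X oX).
have -> : normb (x, y) = y ^+ 2 * (X ^+ 2 - red a * X - red b).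
  by rewrite /X /qnorm /=; field.
split; first by rewrite mulf_neq0 ?expf_neq0.
by rewrite invfM -exprVn; integral.
Qed.

Lemma qnorm_integral x y : Ob (normb (x, y)) -> Ob x /\ Ob y.
Proof.
move=> on.
suff descent m : Ob (pi ^+ m * x) /\ Ob (pi ^+ m * y) -> Ob x /\ Ob y.
  have [m1 o1] := pi_pow_integral x; have [m2 o2] := pi_pow_integral y.
  apply: (descent (m1 + m2)%N); rewrite exprD -!mulrA; split; first by rewrite mulrCA; integral.
  by integral.
elim: m => [|m IH]; first by rewrite !expr0 !mul1r.
move=> [ox oy].
have [[[zx [ozx ex]] [zy [ozy ey]]]|not_piO] :=
  classic (in_piO (pi ^+ m.+1 * x) /\ in_piO (pi ^+ m.+1 * y)).
  have unshift z z' : pi ^+ m.+1 * z = pi * z' -> pi ^+ m * z = z'.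
    by move=> h; apply: (mulfI pi_neq0); rewrite mulrA -exprS.
  by apply: IH; rewrite (unshift _ _ ex) (unshift _ _ ey).
have [nz oz] := qnorm_unit ox oy not_piO.
case: (unit_notin_piO nz oz); exists (pi ^+ m * pi ^+ m.+1 * normb (x, y)).
by split; [integral | rewrite /qnorm /= !exprS; ring].
Qed.

Local Notation B := (Bform a b).

Lemma OE_Bform v w : OK2 v -> OK2 w -> OE (B v w).
Proof.
have := OE_inv2; have := OE_a; have := OE_b.
split_pairs; rewrite /OK2 /OK /= => ? ? ? [[? ?] [? ?]] [[? ?] [? ?]].
by rewrite /Bform /qpair /qtr /qmul /qiota /qsub /qadd /qopp /qemb /=; integral.
Qed.

Lemma red_qnorm z : red (qnorm a b z) = qnorm (red a) (red b) (redK red z).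
Proof. by rewrite /qnorm !rmorphB !rmorphD !rmorphM ?rmorphXn. Qed.

Lemma Qtilde_vact c0 v g : \det g = 1 -> Qtilde red a b c0 v -> Qtilde red a b c0 (vact v g).
Proof.
rewrite /Qtilde /Qbar redV_vact qdet_vact det_map_mx => -> ->.
by rewrite rmorph1; quad_ring.
Qed.

Lemma Bform_NN v w : B (vscal N v) (vscal N w) = 0.
Proof. by rewrite Bform_scalel Bform_scaler mulrA N_square0 mul0r. Qed.

Section Character.
Variables (C : fieldType) (psi : E -> C).
Hypothesis Hpsi : good_character OE N t psi.

Lemma psiD x y : psi (x + y) = psi x * psi y. Proof. by case: Hpsi. Qed.
Lemma psi_OE x : OE x -> psi x = 1. Proof. by case: Hpsi => _ _ + _; apply. Qed.

Definition deltaO v : C :=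
  let l := liftV (redV v) in
  if `[< red_integral v >] then psi (B l (vsub v l)) else 0.

Lemma psi_Bform_lift l1 l2 v : OK2 l1 -> OK2 l2 -> redV l1 = redV v -> redV l2 = redV v ->
  psi (B l1 (vsub v l1)) = psi (B l2 (vsub v l2)).
Proof.
move=> o1 o2 r1 r2.
have [w vE] := redV_eq (esym r2).
have [y oy lE] := redV_eq_OK2 o2 o1 (etrans r2 (esym r1)).
have -> : l1 = vsub l2 (vscal N y) by rewrite -lE; quad_ring.
have -> : v = vadd l2 (vscal N w) by rewrite -vE; quad_ring.
have -> : vsub (vadd l2 (vscal N w)) (vsub l2 (vscal N y)) = vscal N (vadd w y) by quad_ring.
have -> : vsub (vadd l2 (vscal N w)) l2 = vscal N w by quad_ring.
rewrite Bform_subl Bform_NN subr0 !Bform_scaler Bform_addr mulrDr psiD.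
by rewrite [psi (N * B l2 y)]psi_OE ?mulr1 //; apply: OEM; [exact: OE_N | exact: OE_Bform].
Qed.

Lemma deltaO_lift v l : OK2 l -> redV l = redV v -> deltaO v = psi (B l (vsub v l)).
Proof.
move=> ol rl; have iv : red_integral v by rewrite -rl; exact: OKbar2_redV.
have [ol' rl'] := liftVP iv.
by rewrite /deltaO; case: asboolP => // _; apply: psi_Bform_lift.
Qed.

Lemma deltaO_nonintegral v : ~ red_integral v -> deltaO v = 0.
Proof. by rewrite /deltaO; case: asboolP. Qed.

Lemma deltaO_locally_constant v :
  exists n : nat, forall w, close OE t n w v -> deltaO w = deltaO v.
Proof.
have [iv|niv] := pselect (red_integral v); last first.
  exists 0%N => w /closeP [y oy wv]; rewrite !deltaO_nonintegral // => iw; apply: niv.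
  have -> : v = vadd w (vscal (-1) (vsub w v)) by quad_ring.
  apply: red_integral_add => //; rewrite wv.
  by apply: OK2_vscal; [integral | apply: OK2_vscal => //; integral].
have [ol rl] := liftVP iv; set l := liftV _ in ol rl.
have [n on] := t_pow_integral_vec (vsub v l).
exists n => w /closeP [y oy wv].
rewrite (deltaO_lift (l := vadd l (vsub w v))); first last.
- by rewrite redV_vadd rl -redV_vadd; congr redV; quad_ring.
- by rewrite wv; apply: OK2_vadd => //; apply: OK2_vscal; integral.
rewrite (deltaO_lift ol rl).
have -> : vsub w (vadd l (vsub w v)) = vsub v l by quad_ring.
rewrite Bform_addl psiD wv Bform_scalel -Bform_scaler [psi (B y _)]psi_OE ?mulr1 //.
exact: OE_Bform.
Qed.

Lemma deltaO_translate v w :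
  deltaO (vadd v (vscal N w)) = psi (B v (vscal N w)) * deltaO v.
Proof.
have [iv|niv] := pselect (red_integral v); last first.
  by rewrite !deltaO_nonintegral ?mulr0 ?redV_vaddN.
have [ol rl] := liftVP iv; set l := liftV _ in ol rl.
rewrite (deltaO_lift ol rl) (deltaO_lift ol); last by rewrite redV_vaddN.
have [w' vE] := redV_eq (esym rl).
have -> : vsub (vadd v (vscal N w)) l = vadd (vsub v l) (vscal N w) by quad_ring.
rewrite Bform_addr psiD mulrC; congr (_ * _).
have vl : v = vadd l (vscal N w') by rewrite -vE; quad_ring.
by rewrite [in RHS]vl Bform_addl Bform_NN addr0.
Qed.

Lemma deltaO_vact v g : inSL2O OE g -> deltaO (vact v g) = deltaO v.
Proof.
move=> gK; have [iv|niv] := pselect (red_integral v); last first.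
  by rewrite !deltaO_nonintegral // (red_integral_vactE _ gK).
have [ol rl] := liftVP iv; set l := liftV _ in ol rl.
case: gK => dg og; rewrite (deltaO_lift ol rl) (deltaO_lift (l := vact l g)).
- by rewrite vsub_vact Bform_vact dg mul1r.
- exact: OK2_vact.
- by rewrite !redV_vact rl.
Qed.

Lemma deltaO_integral v : OK2 v -> deltaO v = 1.
Proof.
move=> ov; rewrite (deltaO_lift ov) // (_ : vsub v v = vscal 0 v); last by quad_ring.
by rewrite Bform_scaler mul0r psi_OE //; exact: OE0.
Qed.

Lemma deltaO_in_F c0 : in_F red OE N t a b psi c0 deltaO.
Proof.
split.
- by move=> v _; have [n cn] := deltaO_locally_constant v; exists n => w _; apply: cn.
- by move=> v n /NK2P [w ->] _ _; exact: deltaO_translate.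
exists 0%N => v _ nz; rewrite (_ : vscal _ v = v); last by quad_ring.
by have [//|niv] := pselect (red_integral v); rewrite deltaO_nonintegral ?eqxx in nz.
Qed.

Lemma deltaO_is_delta c0 : is_delta_O red OE a b c0 deltaO.
Proof.
move=> v qv; split; first by move=> nq; apply: deltaO_nonintegral => iv; apply: nq.
by move=> ov _; exact: deltaO_integral.
Qed.

Lemma psi_nontrivial m : ~ Ob (red m) -> exists2 y, OE y & psi (N * (y * m)) != 1.
Proof.
move=> om; have [_ _ _ [x [ox psix]]] := Hpsi.
have nm : red m != 0 by apply: contra_not_neq om => ->; exact: Ob0.
have [u [[k|k] [ou ou' mE]]] := valuation nm.
  by case: om; rewrite mE -exprnP; integral.
rewrite NegzE -exprnN in mE.
have nu : u != 0 by apply: contraNneq nm => u0; rewrite mE u0 mul0r.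
have [oy ry] := @liftP (red x * u^-1 * pi ^+ k) ltac:(integral).
exists (lift (red x * u^-1 * pi ^+ k)) => //.
suff -> : N * (lift (red x * u^-1 * pi ^+ k) * m) = N * (t^-1 * x).
  by rewrite mulrA (mulrC N).
apply: mulN_red; rewrite !rmorphM ry rmorphV ?t_unit // mE exprS; field.
by rewrite nu expf_neq0 ?pi_neq0.
Qed.

Lemma deltaO_eq c0 delta : in_F red OE N t a b psi c0 delta -> is_delta_O red OE a b c0 delta ->
  forall u, Qtilde red a b c0 u -> delta u = deltaO u.
Proof.
move=> [_ delta_translate _] isdelta u qu.
have [iu|niu] := pselect (red_integral u); last first.
  by rewrite deltaO_nonintegral //; apply: (isdelta u qu).1 => -[].
have [ol rl] := liftVP iu; set l := liftV _ in ol rl.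
have [w uw] := redV_eq (esym rl).
have ql : Qtilde red a b c0 l by rewrite /Qtilde rl.
have uE : u = vadd l (vscal N w) by rewrite -uw; quad_ring.
rewrite (deltaO_lift ol rl) uw {1}uE delta_translate -?uE //; last exact: NK2_vscal.
by rewrite (isdelta l ql).2 ?mulr1 //; split; rewrite rl.
Qed.

(** * Uniqueness and the Hecke operator *)

Section Orbit.
Variable c0 : Ebar * Ebar.
Hypothesis Htr : qtr (red a) c0 = 0.
Hypothesis Hval : OKbar red OE c0 /\
  exists d, OKbar red OE d /\ qmul (red a) (red b) c0 d = (1, 0).

Local Notation QT := (Qtilde red a b c0).

Lemma c0_1E : c0.1 = - (red a * c0.2) / 2%:R.
Proof.
apply: (mulfI two_neq0); rewrite mulrCA mulfV ?two_neq0 // mulr1.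
by apply/eqP; rewrite -subr_eq0 opprK; apply/eqP; exact: Htr.
Qed.

Lemma c0_2_unit : c0.2 != 0 /\ Ob c0.2^-1.
Proof.
have [[oc1 oc2] [d [[od1 od2] cd]]] := Hval.
have oa := OE_a; have ob := OE_b; have o2 := Ob_inv2.
have normcd : qnorm (red a) (red b) c0 * qnorm (red a) (red b) d = 1.
  by rewrite -qnorm_mul cd /qnorm /=; ring.
have nc : c0.2 != 0.
  apply/eqP => c20; have : (0 : Ebar) = 1 by rewrite -normcd /qnorm c0_1E c20; ring.
  by move/eqP; rewrite eq_sym oner_eq0.
split=> //.
have -> : c0.2^-1 = - (c0.2 * (red a ^+ 2 + 4%:R * red b) * (2%:R)^-1 ^+ 2 *
                       qnorm (red a) (red b) d).
  apply: (mulfI nc); rewrite mulfV // -[LHS]normcd /qnorm c0_1E; field.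
  by rewrite two_neq0.
by rewrite /qnorm; integral.
Qed.

(* For v = (1, z) one has det(iota(v), v) = 2 z - Tr z, whence the choice z = c0 / 2. *)
Definition v0bar : (Ebar * Ebar) * (Ebar * Ebar) := ((1, 0), (c0.1 / 2%:R, c0.2 / 2%:R)).
Definition v0 : (E * E) * (E * E) := liftV v0bar.

Lemma qdet_v0bar : qdet (red a) (red b) v0bar = c0.
Proof.
have h2 := two_neq0; move: c0_1E; rewrite /v0bar; case: c0 => [x y] /= ->.
by quad_unfold; congr (_, _); field.
Qed.

Lemma v0P : OK2 v0 /\ redV v0 = v0bar.
Proof.
apply: liftVP; have [[oc1 oc2] _] := Hval; have := Ob_inv2.
by rewrite /OKbar2 /OKbar /=; do !split; integral.
Qed.

Lemma QT_v0 : QT v0.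
Proof. by rewrite /Qtilde /Qbar (proj2 v0P) qdet_v0bar. Qed.

Lemma deltaO_v0 : deltaO v0 = 1.
Proof. exact: deltaO_integral (proj1 v0P). Qed.

Lemma SL2O_transitive u : QT u -> red_integral u ->
  exists2 g, inSL2O OE g & redV (vact v0 g) = redV u.
Proof.
move=> qu iu; have [nc oc] := c0_2_unit; have [[oc1 oc2] _] := Hval; have h2 := two_neq0.
suff [gb [ogb dgb <-]] : exists gb : 'M[Ebar]_2,
    [/\ forall i j, Ob (gb i j), \det gb = 1 & vact v0bar gb = redV u].
  by have [g gK <-] := lift_SL2 ogb dgb; exists g; rewrite // redV_vact (proj2 v0P).
move: qu iu; rewrite /Qtilde /Qbar; case: (redV u) => [[x1 x2] [x3 x4]] qu [[o1 o2] [o3 o4]].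
pose G := mx2 (x1 - x2 * c0.1 / c0.2) (x3 - x4 * c0.1 / c0.2)
              (2%:R * x2 / c0.2) (2%:R * x4 / c0.2).
have vG : vact v0bar G = ((x1, x2), (x3, x4)).
  rewrite /vact /v0bar /G /qadd /qscal !mxE /=.
  by congr ((_, _), (_, _)); field; rewrite ?nc ?h2.
exists G; split=> //.
  by move=> i j; rewrite !mxE; case: (i : nat) => [|?]; case: (j : nat) => [|?]; integral.
have := qdet_vact (red a) (red b) v0bar G; rewrite vG qu qdet_v0bar.
by move/(congr1 snd) => /= c2E; apply: (mulIf nc); rewrite mul1r -c2E.
Qed.

Section Invariants.
Variable phi : (E * E) * (E * E) -> C.
Hypothesis phi_translate : forall v n, NK2 N n -> QT v -> QT (vadd v n) ->
  phi (vadd v n) = psi (B v n) * phi v.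
Hypothesis phi_invariant : SL2O_invariant red OE a b c0 phi.

Lemma invariant_shear_vanish u g n : QT u -> inSL2O OE g ->
  vact u g = vadd u (vscal N n) -> psi (B u (vscal N n)) != 1 -> phi u = 0.
Proof.
move=> qu gK ug npsi.
have qun : QT (vadd u (vscal N n)) by rewrite -ug; apply: Qtilde_vact => //; case: gK.
have := phi_translate (NK2_vscal n) qu qun; rewrite -ug phi_invariant // => phiu.
have : (1 - psi (B u (vscal N n))) * phi u = 0 by rewrite mulrBl mul1r {1}phiu subrr.
by move/eqP; rewrite mulf_eq0 subr_eq0 eq_sym (negbTE npsi) => /eqP.
Qed.

Lemma invariant_vanish u : QT u -> ~ red_integral u -> phi u = 0.
Proof.
move=> qu niu; have u2 := two_unit.
have [nu1|nu2] : ~ OKbar red OE (redK red u.1) \/ ~ OKbar red OE (redK red u.2).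
  have [o1|] := pselect (OKbar red OE (redK red u.1)); last by left.
  by right => o2; apply: niu; exact: (conj o1 o2).
- have [y oy npsi] : exists2 y, OE y & psi (N * (y * qnorm a b u.1)) != 1.
    by apply: psi_nontrivial; rewrite red_qnorm => /qnorm_integral.
  apply: (invariant_shear_vanish (g := mx2 1 (N * y) 0 1) (n := ((0, 0), qscal y u.1))) => //.
  - by apply: inSL2O_mx2; rewrite ?mulr1 ?mulr0 ?subr0; integral.
  - by rewrite /vact !mxE /=; quad_ring.
  - by rewrite Bform_scaler Bform_shear_upper.
- have [y oy npsi] : exists2 y, OE y & psi (N * (y * - qnorm a b u.2)) != 1.
    by apply: psi_nontrivial; rewrite rmorphN red_qnorm => /ObN; rewrite opprK => /qnorm_integral.
  apply: (invariant_shear_vanish (g := mx2 1 0 (N * y) 1) (n := (qscal y u.2, (0, 0)))) => //.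
  - by apply: inSL2O_mx2; rewrite ?mulr1 ?mul0r ?subr0; integral.
  - by rewrite /vact !mxE /=; quad_ring.
  - by rewrite Bform_scaler Bform_shear_lower // -mulrN.
Qed.

Lemma invariant_from_v0 u g : QT u -> inSL2O OE g -> redV (vact v0 g) = redV u ->
  phi u = psi (B (vact v0 g) (vsub u (vact v0 g))) * phi v0.
Proof.
move=> qu gK rg; have [w uw] := redV_eq (esym rg).
have q0 : QT (vact v0 g) by apply: Qtilde_vact; [case: gK | exact: QT_v0].
have uE : u = vadd (vact v0 g) (vscal N w) by rewrite -uw; quad_ring.
have qu' : QT (vadd (vact v0 g) (vscal N w)) by rewrite -uE.
rewrite {1}uE (phi_translate (NK2_vscal w) q0 qu') phi_invariant ?uw //.
exact: QT_v0.
Qed.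

End Invariants.

Lemma invariant_eq_deltaO phi :
  (forall v n, NK2 N n -> QT v -> QT (vadd v n) -> phi (vadd v n) = psi (B v n) * phi v) ->
  SL2O_invariant red OE a b c0 phi -> forall u, QT u -> phi u = phi v0 * deltaO u.
Proof.
move=> phi_tr phi_inv u qu.
have [iu|niu] := pselect (red_integral u); last first.
  by rewrite (invariant_vanish phi_tr phi_inv) // deltaO_nonintegral ?mulr0.
have [g gK rg] := SL2O_transitive qu iu.
have [_ deltaO_tr _] := deltaO_in_F c0.
have deltaO_inv : SL2O_invariant red OE a b c0 deltaO by move=> ? ? ? _; exact: deltaO_vact.
rewrite (invariant_from_v0 phi_tr phi_inv qu gK rg).
by rewrite (invariant_from_v0 deltaO_tr deltaO_inv qu gK rg) deltaO_v0 mulr1 mulrC.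
Qed.

Lemma c0_not_pi_multiple X : OKbar red OE X -> c0 <> qscal pi X.
Proof.
move=> oX c0E; have [_ [d [od cd]]] := Hval; have oa := OE_a; have ob := OE_b.
apply: pi_inv_notOb.
have /(congr1 fst) /= piXd : qscal pi (qmul (red a) (red b) X d) = (1, 0).
  by rewrite -cd c0E; quad_ring.
have -> : pi^-1 = (qmul (red a) (red b) X d).1.
  by apply: (mulfI pi_neq0); rewrite mulfV ?pi_neq0.
by move: oX od; case: X {c0E piXd} => ? ?; case: d {cd} => ? ? [? ?] [? ?] /=; integral.
Qed.

Lemma double_coset_nonintegral h : in_double_coset OE t h -> ~ red_integral (vact v0 h).
Proof.
move=> [k1 [k2 [k1K k2K ->]]]; rewrite -!vact_mul => /(red_integral_vactE _ k2K).
have ow : OK2 (vact v0 k1) by apply: OK2_vact (proj2 k1K) (proj1 v0P).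
have qw : QT (vact v0 k1) by apply: Qtilde_vact (proj1 k1K) QT_v0.
move: (vact v0 k1) ow qw => -[[w1 w2] [w3 w4]] [[o1 o2] [o3 o4]].
rewrite /Qtilde /Qbar /redV /redK /= => qw.
rewrite diag_tE /vact !mxE /OKbar2 /OKbar /redV /redK /qadd /qscal /= => -[_ [ox3 ox4]].
rewrite !mul0r !add0r !rmorphM rmorphV ?t_unit // in ox3 ox4.
have oa := OE_a; have ob := OE_b.
apply: (@c0_not_pi_multiple
  (qdet (red a) (red b) ((red w1, red w2), (pi^-1 * red w3, pi^-1 * red w4)))).
  by quad_unfold; split; integral.
by rewrite -qw; quad_unfold; congr (_, _); field; exact: pi_neq0.
Qed.

Section Hecke.
Variable L : seq 'M[E]_2.
Hypothesis HL : coset_reps OE t L.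

Lemma hecke_translate v n : NK2 N n ->
  hecke L deltaO (vadd v n) = psi (B v n) * hecke L deltaO v.
Proof.
move=> /NK2P [w ->]; rewrite /hecke big_distrr /=; apply: eq_big_seq => h hL.
have dh : \det h = 1 by case: HL => + _ _ => /(_ h hL) /in_double_coset_det.
by rewrite -vadd_vact -vscal_vact deltaO_translate vscal_vact Bform_vact dh mul1r.
Qed.

(* Left multiplication by g permutes the cosets h SL_2(O_E) of the representatives. *)
Lemma hecke_invariant : SL2O_invariant red OE a b c0 (hecke L deltaO).
Proof.
move=> g gK v _; rewrite /hecke; case: HL => L_dc L_cover L_uniq.
have ex (i : 'I_(size L)) :
    exists j : 'I_(size L), `[< same_coset OE (g *m nth 0 L i) (nth 0 L j) >].
  have [h' hL' sc] := L_cover _ (in_double_coset_mull gK (L_dc _ (mem_nth 0 (ltn_ord i)))).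
  by exists (Ordinal (etrans (index_mem h' L) hL')); apply/asboolP; rewrite /= nth_index.
pose sigma i := xchoose (ex i).
have sigmaP (i : 'I_(size L)) : same_coset OE (g *m nth 0 L i) (nth 0 L (sigma i)).
  by apply/asboolP; exact: (xchooseP (ex i)).
have sigma_inj : injective sigma.
  move=> i j eij; apply: val_inj; apply: L_uniq; [exact: ltn_ord | exact: ltn_ord |].
  apply: (same_coset_mul2l gK); apply: same_coset_trans (sigmaP i) _.
  by rewrite eij; exact: same_coset_sym (sigmaP j).
rewrite (big_nth 0) [RHS](big_nth 0) !big_mkord [RHS](reindex_inj sigma_inj) /=.
apply: eq_bigr => i _; have [k [kK gLi]] := sigmaP i.
by rewrite vact_mul gLi -vact_mul deltaO_vact.
Qed.

Lemma hecke_eq0 u : QT u -> hecke L deltaO u = 0.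
Proof.
move=> qu; rewrite (invariant_eq_deltaO _ hecke_invariant qu); last first.
  by move=> v n nn _ _; exact: hecke_translate.
rewrite /hecke big_seq big1 ?mul0r // => h hL.
by apply: deltaO_nonintegral; apply: double_coset_nonintegral; case: HL => + _ _; apply.
Qed.

End Hecke.

End Orbit.
End Character.
End Quadratic.
End Setting.

Theorem proposition4p8
  (E : comUnitRingType) (Ebar : fieldType) (red : {rmorphism E -> Ebar})
  (OE : pred E) (N t : E)
  (Hset : setting_axioms red OE N t)
  (a b : E) (Hunr : unramified_quadratic red OE t a b)
  (R : realType) (psi : E -> R[i]) (Hpsi : good_character OE N t psi)
  (c0 : Ebar * Ebar)
  (Htr : qtr (red a) c0 = 0)
  (Hval : OKbar red OE c0 /\
          exists d, OKbar red OE d /\ qmul (red a) (red b) c0 d = (1, 0)) :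
  (* delta_O exists in F_{c0} *)
  (exists delta, in_F red OE N t a b psi c0 delta /\ is_delta_O red OE a b c0 delta)
  /\
  (forall delta : (E * E) * (E * E) -> R[i],
     in_F red OE N t a b psi c0 delta -> is_delta_O red OE a b c0 delta ->
     (* (i) F_{c0}^{SL2(O_E)} is one-dimensional, spanned by delta_O *)
     [/\ SL2O_invariant red OE a b c0 delta,
         (exists v, Qtilde red a b c0 v /\ delta v != 0),
         (forall phi, in_F red OE N t a b psi c0 phi ->
            SL2O_invariant red OE a b c0 phi ->
            exists c : R[i], forall v, Qtilde red a b c0 v -> phi v = c * delta v) &
     (* (ii) T_1(t) delta_O = 0 *)
         (exists L, coset_reps OE t L) /\
         (forall L, coset_reps OE t L ->
            forall v, Qtilde red a b c0 v -> hecke L delta v = 0)]).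
Proof.
split.
  exists (deltaO red OE a b psi).
  by split; [exact: (deltaO_in_F Hset Hunr Hpsi) | exact: (deltaO_is_delta Hset Hunr Hpsi)].
move=> delta deltaF deltaD; have deltaE := deltaO_eq Hset Hunr Hpsi deltaF deltaD.
split.
- move=> g gK v qv; rewrite !deltaE ?(deltaO_vact Hset Hunr Hpsi) //.
  exact: Qtilde_vact (proj1 gK) qv.
- have qv0 := QT_v0 Hset Htr Hval.
  by exists (v0 red OE c0); rewrite deltaE // (deltaO_v0 Hset Hunr Hpsi Hval) oner_neq0.
- move=> phi [_ phi_translate _] phi_inv; exists (phi (v0 red OE c0)) => v qv.
  by rewrite (invariant_eq_deltaO Hset Hunr Hpsi Htr Hval phi_translate phi_inv qv) deltaE.
split=> [|L HL v qv]; first exact: (exists_coset_reps Hset).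
rewrite -(hecke_eq0 Hset Hunr Hpsi Htr Hval HL qv); apply: eq_big_seq => h hL.
apply: deltaE; apply: Qtilde_vact qv; apply: (in_double_coset_det Hset).
by case: HL => + _ _; apply.
Qed.
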